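(* Let $a,b,c$ be independent Uniform$[0,1]$ random variables and, writing $x \bmod 1 := x-\lfloor x\rfloor$, define $u=(a+b+c)\bmod 1$, $v=(a/2+b/2+c)\bmod 1$, $w=(4a/3+2b/3+c)\bmod 1$, $z=(2a/3+b/3+c)\bmod 1$. Let $Y=(a,b)$ and $X=(u,v,w,z)$. Then each of $u$, $v$, $w$, $z$ is (individually) independent of $Y$, whereas $Y$ is almost surely equal to a measurable function of $X$. *)

From HB Require Import structures.
From mathcomp Require Import all_boot all_order all_algebra.
From mathcomp Require Import all_classical all_reals all_analysis.
Set Implicit Arguments. Unset Strict Implicit. Unset Printing Implicit Defensive.
Import Order.TTheory GRing.Theory Num.Theory.
Local Open Scope classical_set_scope.
Local Open Scope ring_scope.

Definition mod1 {R : realType} (x : R) : R := x - (Num.floor x)%:~R.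

Definition uniform01 {d} {T : measurableType d} {R : realType}
  (P : probability T R) (X : T -> R) : Prop :=
  forall A : set R, measurable A ->
    P (X @^-1` A) = (@lebesgue_measure R) (A `&` `[0%R, 1%R]).

Definition indep3 {d} {T : measurableType d} {R : realType}
  (P : probability T R) (X1 X2 X3 : T -> R) : Prop :=
  forall A1 A2 A3 : set R, measurable A1 -> measurable A2 -> measurable A3 ->
    P (X1 @^-1` A1 `&` X2 @^-1` A2 `&` X3 @^-1` A3)
    = (P (X1 @^-1` A1) * P (X2 @^-1` A2) * P (X3 @^-1` A3))%E.

Definition indep2 {d d1 d2} {T : measurableType d} {R : realType}
  {T1 : measurableType d1} {T2 : measurableType d2}
  (P : probability T R) (X : T -> T1) (Y : T -> T2) : Prop :=
  forall (A : set T1) (B : set T2), measurable A -> measurable B ->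
    P (X @^-1` A `&` Y @^-1` B) = (P (X @^-1` A) * P (Y @^-1` B))%E.

From HB Require Import structures.
From mathcomp Require Import all_boot all_order all_algebra.
From mathcomp Require Import all_classical all_reals all_analysis.
From mathcomp Require Import ring lra measurable_realfun.
Set Implicit Arguments. Unset Strict Implicit. Unset Printing Implicit Defensive.
Import Order.TTheory GRing.Theory Num.Theory.
Local Open Scope classical_set_scope.
Local Open Scope ring_scope.

(* Since a, b, c are independent, the law of ((a, b), c) is the
   product of the law of (a, b) with the uniform law on [0, 1].  Each of u, v,
   w, z has the form mod1 (phi (a, b) + c); conditionally on (a, b) it is a
   rotation of the uniform variable c on the circle [0, 1[, hence uniform,
   and Fubini turns this into independence from (a, b).  Conversely, when
   a, b lie in [0, 1[ (almost surely), mod1 (u - v) = a/2 + b/2 and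
   mod1 (w - z) = 2a/3 + b/3, a linear system that determines (a, b). *)

Section mod1.
Context {R : realType}.
Implicit Types x y : R.

Lemma mod1_ge0 x : 0 <= mod1 x.
Proof. by rewrite /mod1 subr_ge0 floor_le. Qed.

Lemma mod1_lt1 x : mod1 x < 1.
Proof. by rewrite /mod1 ltrBlDl -intrD1 floorD1_gt. Qed.

Lemma mod1_id x : 0 <= x < 1 -> mod1 x = x.
Proof. by move=> x01; rewrite /mod1 (floor_def (m := 0)) ?subr0 ?add0r. Qed.

Lemma mod1_idB1 x : 1 <= x < 2 -> mod1 x = x - 1.
Proof. by move=> x12; rewrite /mod1 (floor_def (m := 1)). Qed.

Lemma mod1Dz x (n : int) : mod1 (x + n%:~R) = mod1 x.
Proof.
by rewrite /mod1 floorDrz ?intr_int// intrKfloor intrD opprD addrACA subrr addr0.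
Qed.

Lemma mod1_mod1D x y : mod1 (mod1 x + y) = mod1 (x + y).
Proof.
have -> : mod1 x + y = (x + y) + (- Num.floor x)%:~R by rewrite /mod1 intrN; ring.
exact: mod1Dz.
Qed.

Lemma mod1B x y : mod1 (mod1 x - mod1 y) = mod1 (x - y).
Proof.
have -> : mod1 x - mod1 y = (x - y) + (Num.floor y - Num.floor x)%:~R.
  by rewrite /mod1 intrB; ring.
exact: mod1Dz.
Qed.

Lemma mod1B_id x y : 0 <= x - y < 1 -> mod1 (mod1 x - mod1 y) = x - y.
Proof. by move=> xy01; rewrite mod1B mod1_id. Qed.

Lemma measurable_mod1 : measurable_fun setT (@mod1 R).
Proof.
apply: measurable_funB => //; apply: nondecreasing_measurable => // x y xy.
by rewrite ler_int le_floor.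
Qed.

End mod1.

Lemma measurable_preimage d d' (T : measurableType d) (T' : measurableType d')
  (f : T -> T') (A : set T') :
  measurable_fun setT f -> measurable A -> measurable (f @^-1` A).
Proof. by move=> mf mA; rewrite -[X in measurable X]setTI; exact: mf. Qed.

(* The library's [pushforward m f] is a measure only in a context where
   [measurable_fun setT f] is a hypothesis; taking the proof as an argument
   lets its measure structure be inferred anywhere. *)
Definition image_measure d d' (T : measurableType d) (T' : measurableType d')
  (R : realType) (m : set T -> \bar R) (f : T -> T')
  (mf : measurable_fun setT f) : set T' -> \bar R := pushforward m f.

Section image_measure.
Local Open Scope ereal_scope.
Context d d' (T : measurableType d) (T' : measurableType d') (R : realType).
Variables (f : T -> T') (mf : measurable_fun setT f).

Section measure.
Variable m : {measure set T -> \bar R}.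

Let image_measure0 : image_measure m mf set0 = 0.
Proof. by rewrite /image_measure /pushforward preimage_set0 measure0. Qed.

Let image_measure_ge0 A : 0 <= image_measure m mf A.
Proof. exact: measure_ge0. Qed.

Let image_measure_sigma_additive : semi_sigma_additive (image_measure m mf).
Proof.
move=> F mF tF mUF; rewrite /image_measure /pushforward preimage_bigcup.
apply: measure_semi_sigma_additive.
- by move=> n; exact: measurable_preimage.
- apply/trivIsetP => /= i j _ _ ij; rewrite -preimage_setI.
  by move/trivIsetP : tF => /(_ _ _ _ _ ij) ->//; rewrite preimage_set0.
- by rewrite -preimage_bigcup; exact: measurable_preimage.
Qed.

HB.instance Definition _ := isMeasure.Build _ _ _ (image_measure m mf)
  image_measure0 image_measure_ge0 image_measure_sigma_additive.

End measure.

Section finite_measure.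
Variable m : {finite_measure set T -> \bar R}.

Let image_measure_fin : fin_num_fun (image_measure m mf).
Proof. by move=> A mA; apply: fin_num_measure; exact: measurable_preimage. Qed.

HB.instance Definition _ := Measure_isFinite.Build _ _ _ (image_measure m mf)
  image_measure_fin.

End finite_measure.
End image_measure.

Section lebesgue_measure_mod1.
Context {R : realType}.
Local Notation lambda := (@lebesgue_measure R).

Lemma lebesgue_measure_shift (r : R) (A : set R) : measurable A ->
  lambda ((fun x => x + r) @^-1` A) = lambda A.
Proof.
move=> mA.
have mshift :
    measurable_fun setT (fun x : measurableTypeR R => x + r : measurableTypeR R).
  exact: measurable_funD.
have := @lebesgue_measure_unique R (image_measure lebesgue_measure mshift).
move=> /(_ _ A mA) ->// _ /ocitvP[->|[x x12 ->]]; first by rewrite !measure0.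
rewrite /= /image_measure /pushforward /=.
have -> : (fun y => y + r) @^-1` `]x.1, x.2] = `]x.1 - r, x.2 - r]%classic.
  by apply/seteqP; split => y /=; rewrite !in_itv /= ?ltrBlDr ?lerBrDr.
rewrite !lebesgue_measure_itv /= !lte_fin ltrD2r x12 -!EFinB.
by congr (_%:E); ring.
Qed.

Lemma lebesgue_measure_setI_itv01 (A : set R) : measurable A ->
  lambda (A `&` `[0, 1]) = lambda (A `&` `[0, 1[).
Proof.
move=> mA; have -> : A `&` `[0, 1] = (A `&` `[0, 1[) `|` (A `&` [set 1]).
  apply/seteqP; split => x /=.
    move=> [Ax]; rewrite in_itv /= => /andP[x0 x1].
    have [x_eq1|x_neq1] := eqVneq x 1; first by right.
    by left; split=> //; rewrite in_itv /= x0 lt_neqAle x_neq1 x1.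
  case=> -[Ax]; last by move=> x1; subst x; split=> //; rewrite in_itv /= ler01 lexx.
  by rewrite !in_itv /= => /andP[? ?]; split=> //; apply/andP; split; lra.
rewrite measureU0 //; [exact: measurableI|exact: measurableI|].
apply: (@subset_measure0 _ _ _ lambda _ [set 1]) => //.
- exact: measurableI.
- exact: lebesgue_measure_set1.
Qed.

Lemma mod1D_preimage_itv01 (r : R) (A : set R) : 0 <= r < 1 ->
  [set z | A (mod1 (r + z))] `&` `[0, 1[ =
  ((fun z => z + r) @^-1` (A `&` `[r, 1[)) `|`
  ((fun z => z + (r - 1)) @^-1` (A `&` `[0, r[)).
Proof.
move=> /andP[r0 r1]; apply/seteqP; split => z /=; rewrite !in_itv /=.
  move=> [Az /andP[z0 z1]]; have [rz1|rz1] := ltP (r + z) 1.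
    rewrite mod1_id in Az; last by apply/andP; split; lra.
    by left; rewrite addrC; split => //; apply/andP; split; lra.
  rewrite mod1_idB1 in Az; last by apply/andP; split; lra.
  right; have -> : z + (r - 1) = r + z - 1 by ring.
  by split => //; apply/andP; split; lra.
case=> -[Az /andP[z0 z1]].
  rewrite mod1_id; last by apply/andP; split; lra.
  by rewrite addrC; split => //; apply/andP; split; lra.
rewrite mod1_idB1; last by apply/andP; split; lra.
have -> : r + z - 1 = z + (r - 1) by ring.
by split => //; apply/andP; split; lra.
Qed.

(* Rotation invariance of the uniform measure on the circle [0, 1[: the
   rotation by [r := mod1 s] is the translation by [r] on [0, 1 - r[ and by
   [r - 1] on [1 - r, 1[. *)
Lemma lebesgue_measure_mod1D (s : R) (A : set R) : measurable A ->
  lambda ([set z | A (mod1 (s + z))] `&` `[0, 1]) = lambda (A `&` `[0, 1]).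
Proof.
move=> mA; have r01 : 0 <= mod1 s < 1 by rewrite mod1_ge0 mod1_lt1.
set r := mod1 s in r01.
have -> : [set z | A (mod1 (s + z))] = [set z | A (mod1 (r + z))].
  by apply/seteqP; split => z /=; rewrite /r mod1_mod1D.
have mrot : measurable [set z | A (mod1 (r + z))].
  apply: (measurable_preimage (f := fun z => mod1 (r + z))) => //.
  by apply: measurableT_comp; [exact: measurable_mod1|exact: measurable_funD].
have mshift (q : R) B : measurable B -> measurable ((fun z => z + q) @^-1` B).
  by move=> mB; apply: measurable_preimage => //; exact: measurable_funD.
have mI x y : measurable (A `&` `[x, y[) by exact: measurableI.
rewrite !lebesgue_measure_setI_itv01 // mod1D_preimage_itv01 //.
have -> : A `&` `[0, 1[ = (A `&` `[r, 1[) `|` (A `&` `[0, r[).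
  move: r01 => /andP[r0 r1]; apply/seteqP; split => z /=; rewrite !in_itv /=.
    by move=> [Az /andP[z0 z1]]; have [zr|rz] := ltP z r; [right|left];
      split => //; apply/andP; split; lra.
  by case=> -[Az /andP[z0 z1]]; split => //; apply/andP; split; lra.
rewrite !measureU //; try exact: mI; try exact: mshift.
- congr (_ + _)%E; exact: lebesgue_measure_shift.
all: apply/seteqP; split => z //= [[_]]; rewrite !in_itv /=.
all: by move=> /andP[? ?] [_] /andP[? ?]; lra.
Qed.

End lebesgue_measure_mod1.

Section independence.
Local Open Scope ereal_scope.
Context d (T : measurableType d) (R : realType) (P : probability T R).

Lemma indep2_joint_law d1 d2 (T1 : measurableType d1) (T2 : measurableType d2)
    (X : T -> T1) (Y : T -> T2) (mX : measurable_fun setT X)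
    (mY : measurable_fun setT Y) (S : set (T1 * T2)) :
  indep2 P X Y -> measurable S ->
  P ((fun t => (X t, Y t)) @^-1` S) =
  (image_measure P mX \x image_measure P mY) S.
Proof.
move=> iXY mS; have mXY : measurable_fun setT (fun t => (X t, Y t)).
  exact: measurable_fun_pair.
symmetry; apply: (@product_measure_unique _ _ _ _ _ _ _ (image_measure P mXY)) mS.
by move=> A B mA mB; exact: iXY.
Qed.

Section indep3_pair.
Variables (a b c : T -> R).
Hypotheses (ma : measurable_fun setT a) (mb : measurable_fun setT b)
  (mc : measurable_fun setT c) (iabc : indep3 P a b c).

Let mab : measurable_fun setT (fun t => (a t, b t)).
Proof. exact: measurable_fun_pair. Qed.

Lemma indep3_pair_lawI (S : set (R * R)) (C : set R) :
  measurable S -> measurable C ->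
  P ((fun t => (a t, b t)) @^-1` S `&` c @^-1` C) =
  (image_measure P ma \x image_measure P mb) S * P (c @^-1` C).
Proof.
move=> mS mC; have mcC := measurable_preimage mc mC.
pose Lb_C := image_measure (mrestr P mcC) mb.
have Lb_CE B : measurable B -> Lb_C B = image_measure P mb B * P (c @^-1` C).
  move=> mB; have := iabc measurableT mB mC.
  by rewrite preimage_setT setTI probability_setT mul1e.
have rect A B : measurable A -> measurable B ->
    image_measure (mrestr P mcC) mab (A `*` B) =
    image_measure P ma A * Lb_C B.
  by move=> mA mB; rewrite Lb_CE// muleA; exact: iabc.
transitivity ((image_measure P ma \x Lb_C) S).
  exact/esym/(@product_measure_unique _ _ _ _ _ _ _ _ rect).
rewrite /product_measure1 -ge0_integralZr//; last exact: measurable_fun_xsection.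
by apply: eq_integral => x _; apply: Lb_CE; exact: measurable_xsection.
Qed.

Lemma indep3_pair : indep2 P (fun t => (a t, b t)) c.
Proof.
move=> S C mS mC; rewrite indep3_pair_lawI//.
have := indep3_pair_lawI mS measurableT.
by rewrite preimage_setT setIT probability_setT mule1 => ->.
Qed.

End indep3_pair.

Section mod1D_indep.
Context d' (T' : measurableType d') (Y : T -> T') (c : T -> R).
Hypotheses (mY : measurable_fun setT Y) (mc : measurable_fun setT c)
  (uc : uniform01 P c) (iYc : indep2 P Y c).
Variables (phi : T' -> R) (mphi : measurable_fun setT phi).

(* Fubini over the law of [(Y, c)]: for each value [y] of [Y] the section is
   a rotation of the circle, which preserves the uniform law of [c]. *)
Lemma mod1D_lawI (A : set R) (B : set T') : measurable A -> measurable B ->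
  P ((fun t => mod1 (phi (Y t) + c t)) @^-1` A `&` Y @^-1` B) =
  (@lebesgue_measure R) (A `&` `[0%R, 1%R]) * P (Y @^-1` B).
Proof.
move=> mA mB; pose h (p : T' * R) := mod1 (phi p.1 + p.2).
have mh : measurable_fun setT h.
  apply: measurableT_comp; first exact: measurable_mod1.
  by apply: measurable_funD; [exact: measurableT_comp|exact: measurable_snd].
pose S := (B `*` setT) `&` (h @^-1` A).
have mS : measurable S.
  by apply: measurableI; [exact: measurableX|exact: measurable_preimage].
transitivity (P ((fun t => (Y t, c t)) @^-1` S)).
  congr (P _); apply/seteqP; split => t /=.
    by case=> ? ?; split.
  by case=> -[] ? ? ?; split.
rewrite indep2_joint_law// /product_measure1.
transitivity (\int[image_measure P mY]_y
    ((\1_B y)%:E * (@lebesgue_measure R) (A `&` `[0%R, 1%R]))).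
  apply: eq_integral => y _ /=.
  rewrite [X in X = _]uc; last exact: measurable_xsection.
  rewrite indicE; have [yB|yB] := boolP (y \in B).
    rewrite mul1e -(lebesgue_measure_mod1D (phi y) mA).
    congr (lebesgue_measure (_ `&` _)); apply/seteqP.
    split => z; rewrite /xsection /= inE /S /h /=; first by case.
    by move=> Az; do ?split; rewrite // -inE.
  rewrite mul0e; have -> : xsection S y = set0.
    apply/seteqP; split => z //=; rewrite /xsection /= inE /S /=.
    by move=> [[By _] _]; move/negP : yB; apply; exact: mem_set.
  by rewrite set0I measure0.
rewrite ge0_integralZr//; last by apply/measurable_EFinP; exact: measurable_indic.
by rewrite integral_indic// setIT muleC.
Qed.

Lemma uniform01_mod1D : uniform01 P (fun t => mod1 (phi (Y t) + c t)).
Proof.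
move=> A mA; have := mod1D_lawI mA measurableT.
by rewrite preimage_setT setIT probability_setT mule1.
Qed.

Lemma indep2_mod1D : indep2 P (fun t => mod1 (phi (Y t) + c t)) Y.
Proof. by move=> A B mA mB; rewrite mod1D_lawI// uniform01_mod1D. Qed.

End mod1D_indep.
End independence.

Lemma uniform01_ae_itv01 d (T : measurableType d) (R : realType)
    (P : probability T R) (f : T -> R) :
  measurable_fun setT f -> uniform01 P f -> {ae P, forall t, 0 <= f t < 1}.
Proof.
move=> mf uf; have mC : measurable (~` `[0, 1[ : set R) by exact: measurableC.
have : P.-negligible (f @^-1` (~` `[0, 1[)).
  apply/negligibleP; first exact: (measurable_preimage mf mC).
  transitivity ((@lebesgue_measure R) (~` `[0, 1[ `&` `[0%R, 1%R])); first exact: uf.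
  by rewrite lebesgue_measure_setI_itv01// setICl measure0.
by apply: negligibleS => t /=; rewrite in_itv.
Qed.

Definition unmix {R : realType} (x : R * R * R * R) : R * R :=
  let p := mod1 (x.1.1.1 - x.1.1.2) in
  let q := mod1 (x.1.2 - x.2) in
  (3 * q - 2 * p, 4 * p - 3 * q).

Lemma measurable_unmix (R : realType) : measurable_fun setT (@unmix R).
Proof.
have mp : measurable_fun setT (fun x : R * R * R * R => mod1 (x.1.1.1 - x.1.1.2)).
  apply: measurableT_comp; first exact: measurable_mod1.
  by apply: measurable_funB; do 2 apply: measurableT_comp => //.
have mq : measurable_fun setT (fun x : R * R * R * R => mod1 (x.1.2 - x.2)).
  apply: measurableT_comp; first exact: measurable_mod1.
  by apply: measurable_funB => //; apply: measurableT_comp.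
by apply: measurable_fun_pair; apply: measurable_funB; apply: measurable_funM.
Qed.

(* [mod1 (u - v) = a/2 + b/2] and [mod1 (w - z) = 2a/3 + b/3]: no wrap-around
   happens because [a, b] lie in [0, 1[. *)
Lemma unmixK (R : realType) (a b c : R) : 0 <= a < 1 -> 0 <= b < 1 ->
  unmix (mod1 (a + b + c), mod1 (a / 2 + b / 2 + c),
         mod1 (4 * a / 3 + 2 * b / 3 + c), mod1 (2 * a / 3 + b / 3 + c)) = (a, b).
Proof.
move=> /andP[a0 a1] /andP[b0 b1].
by rewrite /unmix /= !mod1B_id; [congr pair; lra|lra|lra].
Qed.

Lemma measurable_lin2 (R : realType) (k1 k2 : R) :
  measurable_fun setT (fun p : R * R => k1 * p.1 + k2 * p.2).
Proof. by apply: measurable_funD; apply: measurable_funM. Qed.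

Theorem mainTheorem5 (d : measure_display) (T : measurableType d) (R : realType)
  (P : probability T R) (a b c : T -> R)
  (ma : measurable_fun setT a) (mb : measurable_fun setT b)
  (mc : measurable_fun setT c)
  (ua : uniform01 P a) (ub : uniform01 P b) (uc : uniform01 P c)
  (iabc : indep3 P a b c) :
  let u := fun t => mod1 (a t + b t + c t) in
  let v := fun t => mod1 (a t / 2 + b t / 2 + c t) in
  let w := fun t => mod1 (4 * a t / 3 + 2 * b t / 3 + c t) in
  let z := fun t => mod1 (2 * a t / 3 + b t / 3 + c t) in
  let Y := fun t => (a t, b t) in
  let X := fun t => (u t, v t, w t, z t) in
  [/\ indep2 P u Y, indep2 P v Y, indep2 P w Y, indep2 P z Y &
    exists g : R * R * R * R -> R * R,
      measurable_fun setT g /\ {ae P, forall t, Y t = g (X t)}].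
Proof.
move=> u v w z Y X.
have mY : measurable_fun setT Y by exact: measurable_fun_pair.
have iYc := indep3_pair ma mb mc iabc.
have indep_lin (f : T -> R) (k1 k2 : R) :
    (forall t, f t = mod1 (k1 * a t + k2 * b t + c t)) -> indep2 P f Y.
  move=> fE; rewrite (funext fE).
  exact: (indep2_mod1D mY mc uc iYc (measurable_lin2 k1 k2)).
split.
- by apply: (indep_lin _ 1 1) => t; rewrite !mul1r.
- by apply: (indep_lin _ 2^-1 2^-1) => t; congr mod1; ring.
- by apply: (indep_lin _ (4 / 3) (2 / 3)) => t; congr mod1; ring.
- by apply: (indep_lin _ (2 / 3) 3^-1) => t; congr mod1; ring.
exists unmix; split; first exact: measurable_unmix.
have := uniform01_ae_itv01 ma ua; have := uniform01_ae_itv01 mb ub.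
by apply: filterS2 => t b01 a01; rewrite unmixK.
Qed.
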